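(* For all positive integers $\ell,k$, $$\det\left(f(\ell i - 1, x, qs)^j \big(-f(\ell i, x, s)\big)^{k-j}\right)_{i,j=0}^k = \det\left(f(\ell i, x, s)^j f(\ell i - 1, x, qs)^{k-j}\right)_{i,j=0}^k$$ $$= (-1)^{\binom{k+1}{3} \ell}\, s^{-\binom{k+1}{2} + \binom{k+1}{3} \ell}\, q^{\binom{k+1}{3} \binom{\ell}{2} + \binom{k+1}{4} \ell^2} \prod_{j=0}^{k-1} \mathrm{fac}(k-j, x, q^{\ell j} s, \ell).$$
   Context: Let $x,s,q$ be indeterminates; all quantities live in the field of rational functions in $x,s,q$. The Carlitz $q$-Fibonacci polynomials $f(n,x,s)$ are defined by $f(0,x,s)=0$, $f(1,x,s)=1$ and $f(n, x, s) = x f(n-1, x, s) + q^{n-2} s f(n-2, x, s)$; this recurrence is required to hold for all $n\in\mathbb{Z}$, which uniquely extends $f(n,x,s)$ to negative $n$ (e.g. $f(-1,x,s)=1/(q^{-1}s)$ times appropriate terms as determined by the recurrence). Here $f(n,x,q^a s)$ means $f(n,x,s)$ with $s$ replaced by $q^a s$. For positive integers $r,m$ define $\mathrm{fac}(r,x,s,m)=\prod_{i=1}^r f(im,x,s)$. *)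

From mathcomp Require Import all_boot all_order all_algebra.
Set Implicit Arguments. Unset Strict Implicit. Unset Printing Implicit Defensive.
Import GRing.Theory Num.Theory.
Local Open Scope ring_scope.

Section Carlitz.
Variable F : fieldType.

(* fpair x s q n = (f(n), f(n+1)) for n >= 0, using
   f(n+2) = x f(n+1) + q^n s f(n). *)
Fixpoint fpair (x s q : F) (n : nat) : F * F :=
  match n with
  | 0 => (0, 1)
  | n'.+1 => let: (a, b) := fpair x s q n' in (b, x * b + q ^+ n' * s * a)
  end.

(* bpair x s q m = (f(-m), f(-m+1)) for m >= 0, obtained by running the
   recurrence backwards: f(-m-1) = (f(-m+1) - x f(-m)) * q^(m+1) / s. *)
Fixpoint bpair (x s q : F) (m : nat) : F * F :=
  match m with
  | 0 => (0, 1)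
  | m'.+1 => let: (a, b) := bpair x s q m' in ((b - x * a) * q ^+ m'.+1 / s, a)
  end.

(* The Carlitz q-Fibonacci polynomial f(n, x, s) for n : int
   (the parameter q is passed explicitly as the first argument). *)
Definition cfib (q x s : F) (n : int) : F :=
  match n with
  | Posz k => (fpair x s q k).1
  | Negz k => (bpair x s q k.+1).1   (* Negz k = -(k+1) *)
  end.

Definition cfac (q x s : F) (r m : nat) : F :=
  \prod_(1 <= i < r.+1) cfib q x s (i * m)%N.

End Carlitz.

From mathcomp Require Import all_boot all_order all_algebra.
From mathcomp Require Import ring zify.
Import GRing.Theory Num.Theory.
Set Implicit Arguments. Unset Strict Implicit. Unset Printing Implicit Defensive.

(** Both matrices are homogeneous Vandermonde matrices in the pairs
    [(a_i, b_i) = (f(l i - 1, x, q s), f(l i, x, s))], so both determinants equal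
    [prod_(i < j) (a_i b_j - a_j b_i)].  The sequences [n |-> f(n - 1, x, q s)]
    and [n |-> f(n, x, s)] solve the same recurrence, so for fixed [m = l i] the
    sequence [t |-> a(m) b(m + t) - a(m + t) b(m)] solves the recurrence with [s]
    replaced by [q^m s] and vanishes at [t = 0]; it is therefore
    [W(m) f(t, x, q^m s)], where the Casoratian [W(m)] satisfies
    [W(m + 1) = - q^m s W(m)], i.e. [W(m) = (-1)^m s^(m-1) q^C(m,2)].
    Collecting the powers of [W] gives the sign and the powers of [s] and [q]. *)

Lemma bin2D a b : 'C(a + b, 2) = 'C(a, 2) + a * b + 'C(b, 2).
Proof.
rewrite -binomial.Vandermonde !big_ord_recr big_ord0 /= !subn0 subnn !bin0 !bin1.
by rewrite add0n muln1 mul1n; lia.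
Qed.

Lemma bin2M l i : 'C(l * i, 2) = l ^ 2 * 'C(i, 2) + 'C(l, 2) * i.
Proof.
elim: i => [|i IH]; first by rewrite !muln0.
by rewrite mulnS addnC bin2D IH binS bin1; nia.
Qed.

Lemma sum_bin_ord n m : \sum_(i < n) 'C(i, m) = 'C(n, m.+1).
Proof.
elim: n => [|n IH]; first by rewrite big_ord0.
by rewrite big_ord_recr /= IH binS.
Qed.

Lemma sum_ord n : \sum_(i < n) i = 'C(n, 2).
Proof. by rewrite -bin2_sum big_mkord. Qed.

Lemma sum_mul_subn (g : nat -> nat) k :
  \sum_(i < k.+1) g i * (k - i) = \sum_(j < k.+1) \sum_(i < j) g i.
Proof.
elim: k => [|k IH]; first by rewrite !big_ord1 subnn muln0 big_ord0.
rewrite big_ord_recr [RHS]big_ord_recr /= -IH subnn muln0 addn0 -big_split /=.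
by apply: eq_bigr => i _; rewrite subSn -?mulnSr // -ltnS.
Qed.

Lemma sum_subn k : \sum_(i < k.+1) (k - i) = 'C(k.+1, 2).
Proof.
under eq_bigr do rewrite -[k - _]mul1n.
rewrite (sum_mul_subn (fun=> 1)) -sum_ord.
by apply: eq_bigr => j _; rewrite sum1_card card_ord.
Qed.

Lemma sum_mul_mul_subn l k : \sum_(i < k.+1) l * i * (k - i) = 'C(k.+1, 3) * l.
Proof.
rewrite (sum_mul_subn (fun i => l * i)) -sum_bin_ord big_distrl /=.
by apply: eq_bigr => j _; rewrite -big_distrr /= sum_ord mulnC.
Qed.

Lemma sum_bin2_mul_subn l k : \sum_(i < k.+1) 'C(l * i, 2) * (k - i)
   = 'C(k.+1, 3) * 'C(l, 2) + 'C(k.+1, 4) * l ^ 2.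
Proof.
rewrite (sum_mul_subn (fun i => 'C(l * i, 2))) -!(sum_bin_ord k.+1) !big_distrl -big_split /=.
apply: eq_bigr => j _; under eq_bigr do rewrite bin2M.
by rewrite big_split -!big_distrr /= sum_ord sum_bin_ord addnC mulnC [_ * l ^ 2]mulnC.
Qed.

Local Open Scope ring_scope.

Lemma prod_ltn_pairs (R : comPzRingType) (a : nat -> R) n :
  \prod_(i < n) \prod_(j < n | (i < j)%N) (a i * a j) = \prod_(i < n) a i ^+ n.-1.
Proof.
elim: n => [|n IH]; first by rewrite !big_ord0.
rewrite big_ord_recr /= [X in _ * X]big1 ?mulr1; last first.
  by move=> j; rewrite ltnNge -ltnS ltn_ord.
under eq_bigr => i _ do rewrite (big_mkcond (fun j : 'I_n.+1 => (i < j)%N))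
  big_ord_recr /= ltn_ord -big_mkcond /=.
rewrite big_split /= IH big_split /= prodr_const card_ord big_ord_recr /=.
case: n {IH} => [|n] /=; first by rewrite !big_ord0 !mul1r.
by rewrite mulrA -big_split /=; congr (_ * _); apply: eq_bigr => i _; rewrite exprS mulrC.
Qed.

Lemma det_homVandermonde_nz (F : fieldType) (a b : nat -> F) m :
  (forall i, (i <= m)%N -> a i != 0) ->
  \det (\matrix_(i < m.+1, j < m.+1) (b i ^+ j * a i ^+ (m - j)))
  = \prod_(i < m.+1) \prod_(j < m.+1 | (i < j)%N) (a i * b j - a j * b i).
Proof.
move=> a_nz; pose c : 'rV[F]_m.+1 := \row_i (b i / a i).
have -> : \matrix_(i < m.+1, j < m.+1) (b i ^+ j * a i ^+ (m - j))
    = diag_mx (\row_(i < m.+1) a i ^+ m) *m (Vandermonde m.+1 c)^T.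
  rewrite mul_diag_mx; apply/matrixP => i j; rewrite !mxE expr_div_n.
  have ai_nz := a_nz i (ltn_ord i); have le_jm : (j <= m)%N by rewrite -ltnS.
  have -> : a i ^+ m = a i ^+ (m - j) * a i ^+ j by rewrite -exprD subnK.
  field.
  by rewrite expf_neq0.
rewrite det_mulmx det_diag det_tr det_Vandermonde.
under eq_bigr do rewrite mxE.
rewrite -(prod_ltn_pairs a m.+1) -big_split /=; apply: eq_bigr => i _.
rewrite -big_split /=; apply: eq_bigr => j _; rewrite !mxE.
have ai_nz := a_nz i (ltn_ord i); have aj_nz := a_nz j (ltn_ord j).
by field; rewrite ai_nz aj_nz.
Qed.

Lemma det_homVandermonde (F : fieldType) (a b : nat -> F) m :
  \det (\matrix_(i < m.+1, j < m.+1) (b i ^+ j * a i ^+ (m - j)))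
  = \prod_(i < m.+1) \prod_(j < m.+1 | (i < j)%N) (a i * b j - a j * b i).
Proof.
(* Replacing [a] by [a + X] makes every [a i] a unit of the fraction field; then set [X = 0]. *)
pose A i : {poly F} := (a i)%:P + 'X; pose B i : {poly F} := (b i)%:P.
pose M := \matrix_(i < m.+1, j < m.+1) (B i ^+ j * A i ^+ (m - j)).
have detM : \det M = \prod_(i < m.+1) \prod_(j < m.+1 | (i < j)%N)
                        (A i * B j - A j * B i).
  apply/eqP; rewrite -tofrac_eq -det_map_mx rmorph_prod; apply/eqP.
  have -> : map_mx (@tofrac _) M = \matrix_(i < m.+1, j < m.+1)
       ((@tofrac _ \o B) i ^+ j * (@tofrac _ \o A) i ^+ (m - j)).
    by apply/matrixP => i j; rewrite !mxE rmorphM !rmorphXn.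
  rewrite det_homVandermonde_nz => [|i _].
    apply: eq_bigr => i _; rewrite rmorph_prod; apply: eq_bigr => j _.
    by rewrite rmorphB !rmorphM.
  by rewrite /= tofrac_eq0 /A addrC -size_poly_eq0 size_XaddC.
have := congr1 (horner_eval 0) detM; rewrite -det_map_mx rmorph_prod.
have -> : map_mx (horner_eval 0) M = \matrix_(i < m.+1, j < m.+1) (b i ^+ j * a i ^+ (m - j)).
  apply/matrixP => i j; rewrite !mxE /horner_eval /=.
  by rewrite hornerM !horner_exp hornerD !hornerC hornerX addr0.
move=> ->; apply: eq_bigr => i _; rewrite rmorph_prod; apply: eq_bigr => j _.
by rewrite rmorphB !rmorphM /= /horner_eval !(hornerD, hornerC, hornerX) !addr0.
Qed.

Section CarlitzRecurrence.
Variables (F : fieldType) (q x : F).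

Definition carlitz_rec (s : F) (u : nat -> F) :=
  forall n, u n.+2 = x * u n.+1 + q ^+ n * s * u n.

Lemma fpair_cfib s n : fpair x s q n = (cfib q x s n, cfib q x s n.+1).
Proof. by rewrite /cfib /=; case: (fpair x s q n). Qed.

Lemma cfib_rec s : carlitz_rec s (fun n => cfib q x s n).
Proof. by move=> n; rewrite {1}/cfib /= fpair_cfib. Qed.

(* [f(n - 1, x, q s)] as a sequence in [n]; its value [1/s] at [n = 0] does not depend on [q]. *)
Definition cfib_shift (s : F) (n : nat) :=
  if n is m.+1 then cfib q x (q * s) m else s^-1.

Lemma cfib_shiftE s n : q != 0 -> cfib q x (q * s) (n%:Z - 1) = cfib_shift s n.
Proof.
case: n => [|n] q_nz; last by rewrite -predn_int.
by rewrite /cfib /= mulr0 subr0 mul1r expr1 invfM mulrA divff ?mul1r.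
Qed.

Lemma cfib_shift_rec s : s != 0 -> carlitz_rec s (cfib_shift s).
Proof.
move=> s_nz [|n]; first by rewrite /cfib_shift /cfib /= mulr0 add0r expr0 mul1r divff.
by apply: etrans (cfib_rec (q * s) n) _; rewrite exprSr -[_ * q * s]mulrA.
Qed.

Lemma carlitz_rec_cfib s (v : nat -> F) : carlitz_rec s v -> v 0%N = 0 ->
  forall n, v n = v 1%N * cfib q x s n.
Proof.
move=> v_rec v0 n; suff [] : v n = v 1%N * cfib q x s n /\
                          v n.+1 = v 1%N * cfib q x s n.+1 by [].
elim: n => [|n [IHn IHnS]]; first by rewrite v0 /cfib /= mulr0 mulr1.
by split=> //; rewrite v_rec cfib_rec IHn IHnS; ring.
Qed.

Definition casoratian (u v : nat -> F) m := u m * v m.+1 - u m.+1 * v m.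

Section TwoSolutions.
Variables (s : F) (u v : nat -> F).
Hypotheses (u_rec : carlitz_rec s u) (v_rec : carlitz_rec s v).

Lemma casoratianS m : casoratian u v m.+1 = - (q ^+ m * s) * casoratian u v m.
Proof. by rewrite /casoratian u_rec v_rec; ring. Qed.

Lemma casoratian_shift m t :
  u m * v (m + t) - u (m + t) * v m = casoratian u v m * cfib q x (q ^+ m * s) t.
Proof.
pose w t := u m * v (m + t) - u (m + t) * v m.
rewrite -/(w t) (@carlitz_rec_cfib (q ^+ m * s) w) ?/w ?addn1 ?addn0 ?subrr //.
by move=> n; rewrite /w !addnS u_rec v_rec exprD; ring.
Qed.

Lemma prod_casoratian_shift (l k i : nat) : (i <= k)%N ->
  \prod_(j < k.+1 | (i < j)%N) (u (l * i) * v (l * j) - u (l * j) * v (l * i))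
  = casoratian u v (l * i) ^+ (k - i) * cfac q x (q ^+ (l * i) * s) (k - i) l.
Proof.
move=> le_ik.
rewrite (eq_bigr (fun j : 'I_k.+1 =>
    casoratian u v (l * i) * cfib q x (q ^+ (l * i) * s) (l * (j - i))%N)); last first.
  by move=> j lt_ij; rewrite -casoratian_shift -mulnDr subnKC // ltnW.
rewrite (eq_bigl (fun j : 'I_k.+1 => xpredT j && (i.+1 <= j)%N)) //.
rewrite -(big_geq_mkord i.+1 k.+1 xpredT
  (fun j => casoratian u v (l * i) * cfib q x (q ^+ (l * i) * s) (l * (j - i))%N)).
rewrite -add1n big_addn.
under eq_bigr do rewrite addnK.
rewrite big_split prodr_const_nat subSn // subn1; congr (_ * _).
by rewrite /cfac; apply: eq_bigr => r _; rewrite [(r * l)%N]mulnC.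
Qed.

End TwoSolutions.

Lemma casoratian_cfib s m : s != 0 ->
  casoratian (cfib_shift s) (fun n => cfib q x s n) m
  = (-1) ^+ m * s ^+ m / s * q ^+ 'C(m, 2).
Proof.
move=> s_nz; elim: m => [|m IH].
  by rewrite /casoratian /cfib /= mulr1 mulr0 subr0 !expr0 !mul1r mulr1.
rewrite (casoratianS (cfib_shift_rec s_nz) (cfib_rec s)) IH binS bin1 exprD !exprS; ring.
Qed.

Lemma prod_casoratian_cfib s l k : s != 0 ->
  \prod_(i < k.+1) casoratian (cfib_shift s) (fun n => cfib q x s n) (l * i) ^+ (k - i)
  = (-1) ^+ ('C(k.+1, 3) * l) * s ^ (('C(k.+1, 3) * l)%N%:Z - ('C(k.+1, 2))%:Z)
    * q ^+ ('C(k.+1, 3) * 'C(l, 2) + 'C(k.+1, 4) * l ^ 2).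
Proof.
move=> s_nz; under eq_bigr do rewrite casoratian_cfib // !exprMn -!exprM.
rewrite !big_split /= !prodrXr sum_mul_mul_subn sum_subn sum_bin2_mul_subn.
by rewrite expfzDr // -exprz_inv -!mulrA.
Qed.

End CarlitzRecurrence.

Theorem lemma3 (F : fieldType) (x s q : F) (hs : s != 0) (hq : q != 0)
    (l k : nat) (hl : (0 < l)%N) (hk : (0 < k)%N) :
  \det (\matrix_(i < k.+1, j < k.+1)
          (cfib q x (q * s) ((l * i)%N%:Z - 1) ^+ j
           * (- cfib q x s (l * i)%N) ^+ (k - j)))
  = \det (\matrix_(i < k.+1, j < k.+1)
          (cfib q x s (l * i)%N ^+ j
           * cfib q x (q * s) ((l * i)%N%:Z - 1) ^+ (k - j)))
  /\
  \det (\matrix_(i < k.+1, j < k.+1)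
          (cfib q x s (l * i)%N ^+ j
           * cfib q x (q * s) ((l * i)%N%:Z - 1) ^+ (k - j)))
  = (-1) ^+ ('C(k.+1, 3) * l)
    * s ^ (('C(k.+1, 3) * l)%N%:Z - ('C(k.+1, 2))%:Z)
    * q ^+ ('C(k.+1, 3) * 'C(l, 2) + 'C(k.+1, 4) * l ^ 2)
    * \prod_(j < k) cfac q x (q ^+ (l * j) * s) (k - j) l.
Proof.
pose a i := cfib_shift q x s (l * i); pose b i := cfib q x s (l * i)%N.
under eq_mx do rewrite cfib_shiftE //.
under [X in _ = \det X /\ _]eq_mx do rewrite cfib_shiftE //.
under [X in _ /\ \det X = _]eq_mx do rewrite cfib_shiftE //.
rewrite (det_homVandermonde (fun i => - b i) a) (det_homVandermonde a b).
split; first by apply: eq_bigr => i _; apply: eq_bigr => j _; ring.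
rewrite (eq_bigr _ (fun (i : 'I_k.+1) _ =>
  prod_casoratian_shift (cfib_shift_rec q x hs) (cfib_rec q x s) l (ltn_ord i : (i <= k)%N))).
rewrite big_split /= prod_casoratian_cfib // big_ord_recr /= subnn.
by rewrite [cfac _ _ _ 0 _]big_geq // mulr1.
Qed.
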